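(* Let $H=(W,F)$ be a graph, $xy$ a flat edge of $H$, and $B=(X,Y;E_{XY})$ a cobipartite graph disjoint from $H$ with $E_{XY}\neq\varnothing$. Let $G$ be the graph obtained by the augmentation of the edge $xy$ in $H$ using $B$, and let $D=(V,A)$ be a clique-acyclic orientation of $G$. Let $s_X,s_Y$ be the sinks of $D[X]$ and $D[Y]$ respectively, labelled so that $(s_X,s_Y)\notin A$. Let $U=Y\setminus N_G(s_X)$, let $S_U=\varnothing$ if $U=\varnothing$ and $S_U=\{s_U\}$ where $s_U$ is the sink of $D[U]$ otherwise, and let $Z=(V\setminus(X\cup Y))\cup\{s_X,s_Y\}\cup S_U$. Then $G[Z]$ is isomorphic to $H$, or to $H$ with the edge $xy$ deleted, or to $H$ plus an additional vertex whose neighborhood is $(N_H(y)\cup\{y\})\setminus\{x\}$.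
   Context: An edge of an undirected graph is flat if it is contained in no triangle. A cobipartite graph $B=(X,Y;E_{XY})$ has vertex set partitioned into two cliques $X$ and $Y$, with $E_{XY}$ the set of edges between $X$ and $Y$. The augmentation of a flat edge $xy$ in $H$ using $B$ builds a graph from $H$ and $B$ by removing $x$, $y$ (and the edge $xy$) from $H$, and adding all edges between $X$ and $N_H(x)\setminus\{y\}$ and all edges between $Y$ and $N_H(y)\setminus\{x\}$. $N_G(v)$ is the neighborhood of $v$ in $G$. An orientation orients each edge in exactly one direction; it is clique-acyclic if every clique has a sink, i.e. a vertex receiving an arc from every other vertex of the clique. The condition $(s_X,s_Y)\notin A$ means that if $s_X,s_Y$ are adjacent then the arc is $(s_Y,s_X)$. *)

From mathcomp Require Import all_boot.
Set Implicit Arguments.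
Unset Strict Implicit.
Unset Printing Implicit Defensive.

Definition simple_graph (T : finType) (e : rel T) : Prop :=
  symmetric e /\ irreflexive e.

Definition flat_edge (T : finType) (e : rel T) (x y : T) : Prop :=
  e x y /\ forall w : T, ~~ (e x w && e y w).

Definition is_clique (T : finType) (e : rel T) (K : {set T}) : Prop :=
  forall u v, u \in K -> v \in K -> u != v -> e u v.

Definition rest (W : finType) (x y : W) := {w : W | (w != x) && (w != y)}.

(* Vertex type of the augmentation: (W \ {x,y}) disjoint-union T (= X u Y),
   where X : {set T} and Y = ~: X. *)
Definition aug_vert (W T : finType) (x y : W) : finType := (rest x y + T)%type.
Arguments aug_vert {W} T x y.

Definition augment (W T : finType) (eH : rel W) (x y : W) (eB : rel T)
  (X : {set T}) : rel (aug_vert T x y) :=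
  fun u v =>
    match u, v with
    | inl a, inl b => eH (val a) (val b)
    | inr a, inr b => eB a b
    | inl w, inr t | inr t, inl w =>
        ((t \in X) && eH x (val w)) || ((t \in ~: X) && eH y (val w))
    end.

Definition orientation (T : finType) (e : rel T) (a : rel T) : Prop :=
  (forall u v, e u v = a u v || a v u) /\ (forall u v, ~~ (a u v && a v u)).

Definition is_sink (T : finType) (a : rel T) (K : {set T}) (s : T) : Prop :=
  s \in K /\ forall v, v \in K -> v != s -> a v s.

Definition clique_acyclic (T : finType) (e : rel T) (a : rel T) : Prop :=
  forall K : {set T}, K != set0 -> is_clique e K -> exists s, is_sink a K s.

Definition induced_iso (A : finType) (eA : rel A) (Z : {set A})
  (T' : finType) (eB : rel T') : Prop :=
  exists f : A -> T',
    [/\ {in Z &, injective f}, f @: Z = [set: T'] &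
        {in Z &, forall u v, eA u v = eB (f u) (f v)}].

Definition del_edge (W : finType) (eH : rel W) (x y : W) : rel W :=
  fun a b => eH a b && ~~ (((a == x) && (b == y)) || ((a == y) && (b == x))).

Definition add_vertex (W : finType) (eH : rel W) (x y : W) : rel (option W) :=
  fun u v =>
    match u, v with
    | Some a, Some b => eH a b
    | None, Some b | Some b, None => (eH y b || (b == y)) && (b != x)
    | None, None => false
    end.

Arguments augment {W T} eH x y eB X.
Arguments del_edge {W} eH x y.
Arguments add_vertex {W} eH x y.
Arguments rest {W} x y.

From mathcomp Require Import all_boot.
Set Implicit Arguments.
Unset Strict Implicit.
Unset Printing Implicit Defensive.

(* Project the augmentation back onto H by sending X to x, Y to y and fixing
   the other vertices.  Edges of G with an end outside X u Y are exactly the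
   projected edges of H, so on (V \ (X u Y)) u {s_X, s_Y} the projection is
   an isomorphism onto H or onto H - xy, according as s_X s_Y is an edge.
   If it is not, then s_Y lies in U, and s_U and s_Y are sinks lying in each
   other's cliques, hence equal: S_U adds nothing.  If it is, then s_U is a
   vertex of Y other than s_Y, missing s_X, and adjacent to s_Y and to the
   neighbours of y outside X u Y: the extra vertex of the third outcome. *)

Definition induced_iso_by (A B : finType) (eA : rel A) (Z : {set A}) (eB : rel B)
    (f : A -> B) : Prop :=
  [/\ {in Z &, injective f}, f @: Z = [set: B] &
      {in Z &, forall u v, eA u v = eB (f u) (f v)}].

Definition adjoin_vertex (B : finType) (e : rel B) (N : pred B) : rel (option B) :=
  fun u v =>
    match u, v with
    | Some a, Some b => e a b
    | None, Some b | Some b, None => N b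
    | None, None => false
    end.

Lemma add_vertexE (W : finType) (eH : rel W) (x y : W) :
  add_vertex eH x y = adjoin_vertex eH (fun b => (eH y b || (b == y)) && (b != x)).
Proof. by []. Qed.

Lemma induced_iso_by_adjoin (A B : finType) (eA : rel A) (Z : {set A}) (eB : rel B)
    (N : pred B) (f : A -> B) (z : A) :
  induced_iso_by eA Z eB f -> z \notin Z -> ~~ eA z z ->
  {in Z, forall u, eA z u = N (f u) /\ eA u z = N (f u)} ->
  induced_iso_by eA (z |: Z) (adjoin_vertex eB N)
    (fun u => if u == z then None else Some (f u)).
Proof.
move=> [f_inj f_onto f_edge] zZ zz zN; split.
- move=> u v; rewrite !inE.
  case: (eqVneq u z) => [->|uz]; case: (eqVneq v z) => [->|vz] //= uZ vZ.
  by case=> /f_inj; apply.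
- apply/setP => -[b|]; rewrite !inE; apply/imsetP; last by exists z; rewrite ?setU11 ?eqxx.
  have /imsetP[u uZ ->] : b \in f @: Z by rewrite f_onto inE.
  exists u; first by rewrite setU1r.
  by case: eqVneq uZ => [->|]; rewrite ?(negbTE zZ).
- move=> u v; rewrite !inE.
  case: (eqVneq u z) => [->|uz]; case: (eqVneq v z) => [->|vz] //= uZ vZ.
  + exact/negbTE.
  + by case: (zN v vZ).
  + by case: (zN u uZ).
  + exact: f_edge.
Qed.

Lemma sinks_eq (A : finType) (e a : rel A) (K1 K2 : {set A}) (s1 s2 : A) :
  orientation e a -> is_sink a K1 s1 -> is_sink a K2 s2 ->
  s1 \in K2 -> s2 \in K1 -> s1 = s2.
Proof.
move=> [_ a_anti] [_ sink1] [_ sink2] s1K2 s2K1.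
apply/eqP/negPn/negP => s12.
by have := a_anti s1 s2; rewrite sink2 // sink1 // eq_sym.
Qed.

Section Augmentation.

Variables (W T : finType) (eH : rel W) (x y : W) (eB : rel T) (X : {set T}).
Hypotheses (eH_sym : symmetric eH) (eH_irr : irreflexive eH).
Hypotheses (eB_sym : symmetric eB) (eB_irr : irreflexive eB).
Hypothesis eH_xy : eH x y.

Lemma x_neq_y : x != y.
Proof. by apply: contraTneq eH_xy => ->; rewrite eH_irr. Qed.

Local Notation G := (augment eH x y eB X).

Definition aug_proj (u : aug_vert T x y) : W :=
  match u with inl w => val w | inr t => if t \in X then x else y end.

Lemma aug_proj_inl (w : rest x y) : aug_proj (inl w) = val w.
Proof. by []. Qed.

Lemma augment_inl_l (w : rest x y) v : G (inl w) v = eH (val w) (aug_proj v).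
Proof. by case: v => [//|t] /=; rewrite inE; case: (t \in X); rewrite ?orbF eH_sym. Qed.

Lemma augment_inl_r (w : rest x y) v : G v (inl w) = eH (aug_proj v) (val w).
Proof. by case: v => [//|t] /=; rewrite inE; case: (t \in X); rewrite ?orbF. Qed.

Lemma rest_neq (w : rest x y) : (val w != x) * (val w != y).
Proof. by case/andP: (valP w). Qed.

Variables sX sY : T.
Hypotheses (sX_X : sX \in X) (sY_nX : sY \notin X).

Let Zbase := [set inl w | w : rest x y] :|: [set inr sX; inr sY].

Lemma ZbaseP u : u \in Zbase -> [\/ exists w, u = inl w, u = inr sX | u = inr sY].
Proof.
rewrite !inE => /orP[/imsetP[w _ ->]|/orP[/eqP->|/eqP->]].
- by constructor 1; exists w.
- by constructor 2.
- by constructor 3.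
Qed.

Lemma aug_proj_sX : aug_proj (inr sX) = x.
Proof. by rewrite /= sX_X. Qed.

Lemma aug_proj_sY : aug_proj (inr sY) = y.
Proof. by rewrite /= (negbTE sY_nX). Qed.

Lemma aug_proj_inj : {in Zbase &, injective aug_proj}.
Proof.
move=> u v /ZbaseP[[a ->]|->|->] /ZbaseP[[b ->]|->|->];
  rewrite ?aug_proj_sX ?aug_proj_sY //= => e.
- by rewrite (val_inj e).
- by case: (rest_neq a) => /=; rewrite e eqxx.
- by case: (rest_neq a) => /=; rewrite e eqxx.
- by case: (rest_neq b) => /=; rewrite -e eqxx.
- by case/eqP: x_neq_y.
- by case: (rest_neq b) => /=; rewrite -e eqxx.
- by case/eqP: x_neq_y.
Qed.

Lemma aug_proj_onto : aug_proj @: Zbase = [set: W].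
Proof.
apply/setP => w; rewrite inE; apply/imsetP.
case: (eqVneq w x) => [->|wx].
  by exists (inr sX); rewrite ?aug_proj_sX // !inE eqxx orbT.
case: (eqVneq w y) => [->|wy].
  by exists (inr sY); rewrite ?aug_proj_sY // !inE eqxx !orbT.
have w_rest : (w != x) && (w != y) by rewrite wx wy.
by exists (inl (exist _ w w_rest)); rewrite // !inE imset_f.
Qed.

Definition xy_pair (a b : W) := ((a == x) && (b == y)) || ((a == y) && (b == x)).

Lemma augment_Zbase (e : rel W) :
  (forall a b, ~~ xy_pair a b -> e a b = eH a b) ->
  e x y = eB sX sY -> e y x = eB sX sY ->
  {in Zbase &, forall u v, G u v = e (aug_proj u) (aug_proj v)}.
Proof.
move=> e_off e_xy e_yx.
have e_rest (w : rest x y) b : e (val w) b = eH (val w) b /\ e b (val w) = eH b (val w).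
  by case: (rest_neq w) => /negbTE wx /negbTE wy; rewrite !e_off // /xy_pair wx wy ?andbF.
move=> u v /ZbaseP[[a ->]|->|->] /ZbaseP[[b ->]|->|->].
all: rewrite ?augment_inl_l ?augment_inl_r ?aug_proj_inl ?(e_rest a _).1 ?(e_rest b _).2 //.
all: rewrite ?aug_proj_sX ?aug_proj_sY /= ?eB_irr ?e_xy ?e_yx 1?eB_sym //.
all: by rewrite e_off ?eH_irr // /xy_pair !eqxx ?(negbTE x_neq_y) // eq_sym (negbTE x_neq_y).
Qed.

Lemma induced_iso_by_aug_proj (e : rel W) :
  (forall a b, ~~ xy_pair a b -> e a b = eH a b) ->
  e x y = eB sX sY -> e y x = eB sX sY -> induced_iso_by G Zbase e aug_proj.
Proof.
move=> e_off e_xy e_yx.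
by split; [exact: aug_proj_inj | exact: aug_proj_onto | exact: augment_Zbase].
Qed.

Lemma induced_iso_by_aug_proj_H :
  eB sX sY -> induced_iso_by G Zbase eH aug_proj.
Proof. by move=> sXY; apply: induced_iso_by_aug_proj; rewrite // 1?[eH y x]eH_sym eH_xy. Qed.

Lemma induced_iso_by_aug_proj_del_edge :
  ~~ eB sX sY -> induced_iso_by G Zbase (del_edge eH x y) aug_proj.
Proof.
move=> /negbTE sXnY.
apply: induced_iso_by_aug_proj => [a b||]; rewrite /del_edge /xy_pair.
- by move/negbTE->; rewrite andbT.
- by rewrite !eqxx andbF.
- by rewrite !eqxx orbT andbF.
Qed.

Variable sU : T.
Hypotheses (sU_nX : sU \notin X) (sXY : eB sX sY) (sXnU : ~~ eB sX sU) (sYU : eB sY sU).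

Lemma induced_iso_by_add_vertex :
  induced_iso_by G (inr sU |: Zbase) (add_vertex eH x y)
    (fun u => if u == inr sU then None else Some (aug_proj u)).
Proof.
have sUX_proj : aug_proj (inr sU) = y by rewrite /= (negbTE sU_nX).
rewrite add_vertexE; apply: induced_iso_by_adjoin.
- exact: induced_iso_by_aug_proj_H.
- rewrite !inE !negb_or; apply/and3P; split.
  + by apply/negP => /imsetP[].
  + by apply: contraNneq sU_nX => -[->].
  + by apply: contraNneq sXnU => -[->].
- by rewrite /= eB_irr.
move=> u /ZbaseP[[w ->]|->|->].
- rewrite augment_inl_l augment_inl_r sUX_proj eH_sym.
  by case: (rest_neq w) => /= /negbTE -> /negbTE ->; rewrite orbF andbT.
- by rewrite aug_proj_sX /= eqxx andbF eB_sym (negbTE sXnU).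
- by rewrite aug_proj_sY /= eqxx orbT eq_sym x_neq_y eB_sym sYU.
Qed.

End Augmentation.

Theorem lemma2 (W T : finType) (eH : rel W) (x y : W) (eB : rel T)
  (X : {set T}) (a : rel (aug_vert T x y)) (sX sY sU : T) :
  simple_graph eH ->
  flat_edge eH x y ->
  simple_graph eB ->
  is_clique eB X -> is_clique eB (~: X) ->
  (exists u v, [/\ u \in X, v \in ~: X & eB u v]) ->
  orientation (augment eH x y eB X) a ->
  clique_acyclic (augment eH x y eB X) a ->
  is_sink a [set inr t | t in X] (inr sX) ->
  is_sink a [set inr t | t in ~: X] (inr sY) ->
  ~~ a (inr sX) (inr sY) ->
  let U := [set t in ~: X | ~~ augment eH x y eB X (inr sX) (inr t)] in
  (U != set0 -> is_sink a [set inr t | t in U] (inr sU)) ->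
  let Z := [set inl w | w : rest x y] :|: [set inr sX; inr sY]
           :|: (if U == set0 then set0 else [set inr sU]) in
  induced_iso (augment eH x y eB X) Z eH \/
  induced_iso (augment eH x y eB X) Z (del_edge eH x y) \/
  induced_iso (augment eH x y eB X) Z (add_vertex eH x y).
Proof.
move=> [eH_sym eH_irr] [eH_xy _] [eB_sym eB_irr] _ Y_clique _ a_orient _
  sinkX sinkY _ U sinkU Z.
have mem_inr (K : {set T}) t : (@inr (rest x y) T t \in inr @: K) = (t \in K).
  by apply: mem_imset => ? ? [].
have sX_X : sX \in X by rewrite -mem_inr; case: sinkX.
have sY_nX : sY \notin X by rewrite -in_setC -mem_inr; case: sinkY.
have sinkU_U (U_nonempty : U != set0) : sU \notin X /\ ~~ eB sX sU.
  by case: (sinkU U_nonempty); rewrite mem_inr !inE => /andP[].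
case: (boolP (eB sX sY)) => [sXY | sXnY].
- case: (eqVneq U set0) => [U0 | U_nonempty].
    left; exists (aug_proj X); rewrite /Z U0 eqxx setU0.
    exact: induced_iso_by_aug_proj_H.
  have [sU_nX sXnU] := sinkU_U U_nonempty.
  have sYU : eB sY sU.
    by apply: Y_clique; rewrite ?inE //; apply: contraNneq sXnU => <-.
  right; right; eexists; rewrite /Z (negbTE U_nonempty) setUC.
  exact: induced_iso_by_add_vertex.
have sY_U : sY \in U by rewrite !inE sY_nX /=.
have U_nonempty : U != set0 by apply/set0Pn; exists sY.
have [sU_sY] : inr sU = inr sY :> aug_vert T x y.
  apply: (sinks_eq a_orient (sinkU U_nonempty) sinkY); rewrite mem_inr //.
  by rewrite inE; case: (sinkU_U U_nonempty).
right; left; exists (aug_proj X).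
rewrite /Z (negbTE U_nonempty) sU_sY (setUidPl _); last by rewrite sub1set !inE eqxx !orbT.
exact: induced_iso_by_aug_proj_del_edge.
Qed.
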